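(* Let $p,q$ be language models over a finite non-empty alphabet $\Sigma$ with $\mathrm{KL}(p\|q)<\infty$ and with $q(y)=0$ whenever $p(y)=0$. For $Y\sim p$ let $f(Y)=\log\frac{p(Y)}{q(Y)}$ and $g(Y)=\frac{q(Y)}{p(Y)}$. Then $\mathrm{Cov}(f(Y),g(Y))=0$ if and only if $p=q$.
   Context: Language models are probability distributions over $\Sigma^*$; $\mathrm{KL}(p\|q)=\sum_y p(y)\log\frac{p(y)}{q(y)}$, natural log, $0\log 0=0$. *)

From HB Require Import structures.
From mathcomp Require Import all_boot all_order all_algebra.
From mathcomp Require Import all_classical all_reals all_analysis.
Set Implicit Arguments. Unset Strict Implicit. Unset Printing Implicit Defensive.
Import Order.TTheory GRing.Theory Num.Theory.
Local Open Scope classical_set_scope.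
Local Open Scope ring_scope.

(* Strings over the alphabet S are [seq S]; Sigma^* = [set: seq S]. *)

Definition ssum (R : realType) (T : choiceType) (D : set T) (t : T -> \bar R)
  : \bar R := (\esum_(x in D) t^\+ x - \esum_(x in D) t^\- x)%E.

Definition language_model (R : realType) (S : finType) (p : seq S -> R) : Prop :=
  (forall y, 0 <= p y) /\ (\esum_(y in [set: seq S]) (p y)%:E = 1)%E.

Definition kl_term (R : realType) (S : finType) (p q : seq S -> R) (y : seq S)
  : \bar R :=
  if p y == 0 then 0%E
  else if q y == 0 then +oo%E
  else (p y * ln (p y / q y))%:E.

Definition KL (R : realType) (S : finType) (p q : seq S -> R) : \bar R :=
  ssum [set: seq S] (kl_term p q).

Definition expect (R : realType) (S : finType) (p : seq S -> R) (h : seq S -> R)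
  : \bar R :=
  ssum [set y | 0 < p y] (fun y => (p y * h y)%:E).

Definition cov (R : realType) (S : finType) (p : seq S -> R) (f g : seq S -> R)
  : \bar R :=
  (expect p (fun y => (f y * g y)%R) - expect p f * expect p g)%E.

From HB Require Import structures.
From mathcomp Require Import all_boot all_order all_algebra.
From mathcomp Require Import all_classical all_reals all_analysis.
From mathcomp Require Import ring lra.
Set Implicit Arguments. Unset Strict Implicit. Unset Printing Implicit Defensive.
Import Order.TTheory GRing.Theory Num.Theory.
Local Open Scope classical_set_scope.
Local Open Scope ring_scope.

(* Since q vanishes off the support of p, E[g] = sum_y q(y) = 1, so
   Cov(f, g) = E[f g] - E[f] = - sum_{p(y) > 0} (p(y) - q(y)) log (p(y) / q(y)).
   Finiteness of KL(p||q) forces q > 0 on the support of p, and there every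
   summand (p - q) log (p / q) is nonnegative, vanishing only where p = q.
   As the expectations are signed sums in the extended reals, a vanishing
   covariance first forces both to be finite; the nonnegative sum of the
   differences of their summands is then zero, so every summand is zero. *)

Section ln_div.
Variable R : realType.
Implicit Types x y : R.

Lemma mulB_ln_div_gt0 x y : 0 < x -> 0 < y -> x != y -> 0 < (x - y) * ln (x / y).
Proof.
move=> x0 y0; rewrite ln_div ?posrE //.
case: (ltgtP x y) => // [ltxy|ltyx] _.
- by rewrite nmulr_rgt0 subr_lt0 // ltr_ln ?posrE.
- by rewrite pmulr_rgt0 subr_gt0 // ltr_ln ?posrE.
Qed.

Lemma mulB_ln_div_ge0 x y : 0 < x -> 0 < y -> 0 <= (x - y) * ln (x / y).
Proof.
move=> x0 y0; have [->|xy] := eqVneq x y; first by rewrite subrr mul0r.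
exact/ltW/mulB_ln_div_gt0.
Qed.

Lemma mulB_ln_div_eq0 x y : 0 < x -> 0 < y -> (x - y) * ln (x / y) = 0 -> x = y.
Proof.
move=> x0 y0 /eqP; apply: contraTeq => xy.
by rewrite gt_eqF // mulB_ln_div_gt0.
Qed.

Lemma mul_ln_div_geN x y : 0 < x -> 0 < y -> - y <= x * ln (x / y).
Proof.
move=> x0 y0; rewrite lerNl -mulrN -lnV ?posrE ?divr_gt0 // invf_div.
have /ltW := ln_sublinear (divr_gt0 y0 x0).
by move=> /(ler_wpM2l (ltW x0)); rewrite mulrCA divff ?gt_eqF // mulr1.
Qed.

End ln_div.

Section signed_sum.
Variables (R : realType) (T : choiceType) (D : set T).
Local Open Scope ereal_scope.

Lemma maxr0_subN (x : R) : (Num.max x 0 - Num.max (- x) 0 = x)%R.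
Proof. by case: (ger0P x) (ger0P (- x)) => ? [] ?; lra. Qed.

Lemma ssum_EFin (f : T -> R) : ssum D (fun y => (f y)%:E) =
  \esum_(y in D) (Num.max (f y) 0)%:E - \esum_(y in D) (Num.max (- f y) 0)%:E.
Proof.
by congr (_ - _); apply: eq_esum => y _; rewrite ?funeposE ?funenegE EFin_max.
Qed.

Lemma ge0_ssum (f : T -> \bar R) : (forall y, D y -> 0 <= f y) ->
  ssum D f = \esum_(y in D) f y.
Proof.
move=> f_ge0; rewrite /ssum (esum1 (a := f^\-)) ?sube0.
  by apply: eq_esum => y Dy; rewrite (ge0_funeposE f_ge0) // inE.
by move=> y Dy; rewrite (ge0_funenegE f_ge0) // inE.
Qed.

Lemma le_term_esum (f : T -> \bar R) y : D y -> 0 <= f y ->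
  f y <= \esum_(z in D) f z.
Proof.
move=> Dy fy_ge0; apply: esum_ge; exists [set y]; last by rewrite fsbig_set1.
by split; [exact: finite_set1 | move=> z ->].
Qed.

Lemma ge0_esum_eq0 (f : T -> \bar R) : (forall y, D y -> 0 <= f y) ->
  \esum_(y in D) f y = 0 -> forall y, D y -> f y = 0.
Proof.
move=> f_ge0 sum0 y Dy; apply/eqP; rewrite eq_le f_ge0 // andbT -sum0.
exact: le_term_esum Dy (f_ge0 y Dy).
Qed.

Lemma ssum_sub_eq0_le (a b : T -> R) : (forall y, D y -> (a y <= b y)%R) ->
  ssum D (fun y => (a y)%:E) - ssum D (fun y => (b y)%:E) = 0 ->
  forall y, D y -> a y = b y.
Proof.
move=> le_ab; rewrite !ssum_EFin.
set Ap := esum _ _; set An := esum _ _; set Bp := esum _ _; set Bn := esum _ _.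
move=> sum0.
have : Ap - An - (Bp - Bn) \is a fin_num by rewrite sum0.
rewrite !fin_numB => /andP[/andP[Ap_fin An_fin] /andP[Bp_fin Bn_fin]].
have balance : Bp + An = Ap + Bn.
  move: sum0 Ap_fin An_fin Bp_fin Bn_fin.
  by case: (Ap) (An) (Bp) (Bn) => [ap||] [an||] [bp||] [bn||] //= -[] ? *; congr EFin; lra.
have gap_ge0 y : D y -> 0 <= (b y - a y)%:E by move=> Dy; rewrite lee_fin subr_ge0 le_ab.
have max_ge0 (r : R) : (0 <= Num.max r 0)%R by rewrite le_max lexx orbT.
have : Bp + An = Ap + Bn + \esum_(y in D) (b y - a y)%:E.
  rewrite /Ap /An /Bp /Bn -!esumD;
    [|by move=> y Dy; rewrite ?gap_ge0 ?adde_ge0 ?lee_fin ?max_ge0 ..].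
  apply: eq_esum => y _; rewrite -!EFinD; congr EFin.
  by have := maxr0_subN (a y); have := maxr0_subN (b y); lra.
have ApBn_fin : Ap + Bn \is a fin_num by rewrite fin_numD Ap_fin.
rewrite balance => /eqP; rewrite [X in _ == X]addeC -sube_eq ?fin_num_adde_defl //.
rewrite subee // eq_sym => /eqP /(ge0_esum_eq0 gap_ge0) gap0 y Dy.
by apply/esym/eqP; rewrite -subr_eq0 -eqe gap0.
Qed.

End signed_sum.

Section language_model.
Variables (R : realType) (S : finType).
Implicit Types p q h : seq S -> R.

Lemma kl_term_neg_le p q y : 0 <= p y -> 0 <= q y ->
  ((kl_term p q)^\- y <= (q y)%:E)%E.
Proof.
move=> py_ge0 qy_ge0; rewrite funenegE /kl_term ge_max lee_fin qy_ge0 andbT.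
case: ifPn => [_|py0]; first by rewrite oppe0 lee_fin.
case: ifPn => [_|qy0]; first exact: leNye.
by rewrite lee_fin lerNl mul_ln_div_geN // lt0r ?py0 ?qy0.
Qed.

Lemma KL_lt_pinfty_gt0 p q : (forall y, 0 <= p y) -> language_model q ->
  (KL p q < +oo)%E -> forall y, 0 < p y -> 0 < q y.
Proof.
move=> p_ge0 [q_ge0 q_sum1] KL_fin y py_gt0.
rewrite lt0r q_ge0 andbT; apply: contraTneq KL_fin => qy0.
have pos_oo : (\esum_(z in [set: seq S]) (kl_term p q)^\+ z = +oo)%E.
  apply/eqP; rewrite -leye_eq (_ : +oo = (kl_term p q)^\+ y)%E.
    exact: le_term_esum.
  by rewrite funeposE /kl_term gt_eqF // qy0 eqxx.
have neg_le1 : (\esum_(z in [set: seq S]) (kl_term p q)^\- z <= 1)%E.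
  by rewrite -q_sum1; apply: le_esum => z _; exact: kl_term_neg_le.
by rewrite /KL /ssum pos_oo; move: neg_le1; case: esum.
Qed.

Lemma expect_ratio p q : (forall y, 0 <= p y) -> (forall y, p y = 0 -> q y = 0) ->
  (forall y, 0 <= q y) ->
  expect p (fun y => q y / p y) = \esum_(y in [set: seq S]) (q y)%:E.
Proof.
move=> p_ge0 q0p q_ge0.
have pq y : 0 < p y -> p y * (q y / p y) = q y.
  by move=> py; rewrite mulrCA divff ?mulr1 ?gt_eqF.
rewrite /expect ge0_ssum => [|y /= py]; last by rewrite pq // lee_fin.
rewrite esum_mkcond; apply: eq_esum => y _.
have [py|py_le0] := ltP 0 (p y); first by rewrite mem_set // pq.
have py0 : p y = 0 by apply/le_anti; rewrite py_le0 p_ge0.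
by rewrite q0p // mul0r mulr0; case: ifP.
Qed.

Lemma expect_eq0 p h : (forall y, h y = 0) -> expect p h = 0%E.
Proof. by move=> h0; rewrite /expect ge0_ssum ?esum1 // => y _; rewrite h0 mulr0. Qed.

Lemma cov_ln_ratio_self p :
  cov p (fun y => ln (p y / p y)) (fun y => p y / p y) = 0%E.
Proof.
have ln_divrr y : ln (p y / p y) = 0.
  have [->|py0] := eqVneq (p y) 0; first by rewrite mul0r ln0.
  by rewrite divff // ln1.
have Ef : expect p (fun y => ln (p y / p y)) = 0%E by exact: expect_eq0.
have Efg : expect p (fun y => ln (p y / p y) * (p y / p y)) = 0%E.
  by apply: expect_eq0 => y; rewrite ln_divrr mul0r.
by rewrite /cov Ef Efg mul0e subee.
Qed.

End language_model.

Theorem proposition4 (R : realType) (S : finType) (p q : seq S -> R) :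
  (0 < #|S|)%N ->
  language_model p -> language_model q ->
  (KL p q < +oo)%E ->
  (forall y, p y = 0 -> q y = 0) ->
  cov p (fun y => ln (p y / q y)) (fun y => q y / p y) = 0%E <-> p = q.
Proof.
move=> _ [p_ge0 _] q_lm KL_fin q0p.
have q_gt0 := KL_lt_pinfty_gt0 p_ge0 q_lm KL_fin.
have [q_ge0 q_sum1] := q_lm.
split=> [cov0|<-]; last exact: cov_ln_ratio_self.
have gap y : 0 < p y -> p y * ln (p y / q y) - p y * (ln (p y / q y) * (q y / p y))
    = (p y - q y) * ln (p y / q y).
  by move=> py; field; rewrite gt_eqF.
have terms_le y : 0 < p y ->
    p y * (ln (p y / q y) * (q y / p y)) <= p y * ln (p y / q y).
  by move=> py; rewrite -subr_ge0 gap // mulB_ln_div_ge0 ?q_gt0.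
move: cov0; rewrite /cov expect_ratio // q_sum1 mule1.
move=> /(ssum_sub_eq0_le terms_le) terms_eq.
apply/funext => y; have [py|py_le0] := ltP 0 (p y); last first.
  have py0 : p y = 0 by apply/le_anti; rewrite py_le0 p_ge0.
  by rewrite py0 q0p.
by apply: mulB_ln_div_eq0; rewrite ?q_gt0 // -gap // terms_eq ?subrr.
Qed.
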